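(* Let $0\le s<n$ and let $\rho$ be a $1$-contact $(n-s)$-horizontal $(n-s+1)$-form on $W^1\subseteq J^1Y$, with $$p_1\rho=\big(A^{i_1\dots i_s}_\sigma\omega^\sigma+A^{i_1\dots i_sj}_\sigma\omega^\sigma_j\big)\wedge ds_{i_1\dots i_s},$$ coefficients antisymmetric in $i_1\dots i_s$. Let $\mathbb{V}_\rho$ be the variational morphism $\langle\mathbb{V}_\rho|J^1\Xi\rangle=J^1\Xi\lrcorner\,p_1\rho=(A^{i_1\dots i_s}_\sigma\Xi^\sigma+A^{i_1\dots i_sj}_\sigma\Xi^\sigma_j)\,ds_{i_1\dots i_s}$, and let $(\mathbb{E},\mathbb{T})$ be its canonical splitting with respect to the fibered connection whose coefficients vanish on the chart, i.e. the variational morphisms $\mathbb{E}$ of rank $1$ and degree $n-s$, reduced, and $\mathbb{T}$ of rank $0$ and degree $n-s-1$, such that $\langle\mathbb{V}_\rho|J^1\Xi\rangle=\langle\mathbb{E}|J^1\Xi\rangle+\mathrm{Div}(\langle\mathbb{T}|\Xi\rangle)$ for all $\pi$-vertical $\Xi$. Define $\hat t^{i_1\dots i_si}_\sigma=A^{[i_1\dots i_si]}_\sigma$ and the variational morphisms $$\langle\mathbb{T}'|\Xi\rangle=\frac{1}{s+1}\,\hat t^{i_1\dots i_si}_\sigma\Xi^\sigma\,ds_{i_1\dots i_si},$$ $$\langle\mathbb{E}'|J^1\Xi\rangle=\Big[\big(A^{i_1\dots i_s}_\sigma-d_i\hat t^{i_1\dots i_si}_\sigma\big)\Xi^\sigma+\big(A^{i_1\dots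 i_sj}_\sigma-\hat t^{i_1\dots i_sj}_\sigma\big)\Xi^\sigma_j\Big]ds_{i_1\dots i_s}.$$ Then $\langle\mathbb{V}_\rho|J^1\Xi\rangle=\langle\mathbb{E}'|J^1\Xi\rangle+\mathrm{Div}(\langle\mathbb{T}'|\Xi\rangle)$ and the two splittings coincide: $\mathbb{E}'=\mathbb{E}$ and $\mathbb{T}'=\mathbb{T}$.
   Context: Let $\pi:Y\to X$ be a fibered manifold, $n=\dim X$. Let $U\subseteq X$ be open and $W=\pi^{-1}(U)$ the domain of a fibered chart $(x^i,y^\sigma)$ with associated coordinates $(x^i,y^\sigma,y^\sigma_j)$ on $W^1\subseteq J^1Y$ and $(x^i,y^\sigma_J)$ on higher jets; repeated indices are summed over $1,\dots,n$. Square brackets denote antisymmetrization (weight $1/(\text{number of indices})!$). Contact forms $\omega^\sigma=dy^\sigma-y^\sigma_idx^i$, $\omega^\sigma_j=dy^\sigma_j-y^\sigma_{ji}dx^i$. $ds=dx^1\wedge\dots\wedge dx^n$, $ds_{i_1\dots i_p}=\frac{\partial}{\partial x^{i_p}}\lrcorner\dots\lrcorner\frac{\partial}{\partial x^{i_1}}\lrcorner ds$. Formal derivative $d_i=\frac{\partial}{\partial x^i}+\sum_J y^\sigma_{Ji}\frac{\partial}{\partial y^\sigma_J}$. $p_1$ denotes the $1$-contact component (pull back to $J^2Y$, substitute $dy^\sigma_J=\omega^\sigma_J+y^\sigma_{Ji}dx^i$, keep terms with exactly one $\omega$). For a $\pi$-vertical vector field $\Xi=\Xi^\sigma\partial/\partial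 y^\sigma$, $J^1\Xi=\Xi^\sigma\partial/\partial y^\sigma+\Xi^\sigma_j\partial/\partial y^\sigma_j$ with $\Xi^\sigma_j=d_j\Xi^\sigma$. A variational morphism of rank $r$ and degree $n-s$ assigns to each such $\Xi$ the horizontal form $\frac{1}{s!}\big(\sum_{|J|\le r}v^{i_1\dots i_sJ}_\sigma\Xi^\sigma_J\big)ds_{i_1\dots i_s}$ (coefficients antisymmetric in $i_1\dots i_s$, symmetric in $J$); it is reduced (with respect to the fibered connection with vanishing coefficients) if each of its terms of rank $h\ge1$ satisfies $v^{[i_1\dots i_sj_1]j_2\dots j_h}_\sigma=0$. For a horizontal form $\beta=f^{i_1\dots i_p}ds_{i_1\dots i_p}$ depending on $x$, jets of $y$ and of $\Xi$, $\mathrm{Div}(\beta)=d_lf^{i_1\dots i_p}\,dx^l\wedge ds_{i_1\dots i_p}$, with $d_l$ acting also on $\Xi$-variables by $d_l\Xi^\sigma_J=\Xi^\sigma_{Jl}$. For $r=1$ the pair $(\mathbb{E},\mathbb{T})$ described in the claim is uniquely determined by these conditions. *)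

From HB Require Import structures.
From mathcomp Require Import all_boot all_order all_algebra all_fingroup.
Set Implicit Arguments. Unset Strict Implicit. Unset Printing Implicit Defensive.
Import GRing.Theory.
Local Open Scope ring_scope.

Section FormalJets.
Variables (R : numFieldType) (F : comAlgType R) (n m : nat).
(* F : ring of (smooth) functions on the jet spaces over the chart domain;
   n = dim X, m = fiber dimension, indices sigma : 'I_m. *)

(* multi-indices J (symmetric), encoded by multiplicities *)
Definition mindex := {ffun 'I_n -> nat}.
Definition mi0 : mindex := [ffun => 0%N].
Definition mi1 (j : 'I_n) : mindex := [ffun l => nat_of_bool (l == j)].
Definition mi_dec (a : mindex) (i : 'I_n) : mindex :=
  [ffun l => if l == i then (a l).-1 else a l].

(* A "Xi-linear expression"  sum_{sigma,J} c sigma J * Xi^sigma_J ,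
   the Xi^sigma_J being treated as free symbols (jets of an arbitrary
   pi-vertical field Xi). *)
Definition xexpr := 'I_m -> mindex -> F.

(* formal derivative d_i acting on functions and on Xi-variables:
   d_i Xi^sigma_J = Xi^sigma_{Ji} *)
Definition dX (d : 'I_n -> F -> F) (i : 'I_n) (e : xexpr) : xexpr :=
  fun sg a => d i (e sg a) + (if (0 < a i)%N then e sg (mi_dec a i) else 0).

(* horizontal (n-p)-form  sum_I f^I ds_I , I = (i_1..i_p) *)
Definition hform (p : nat) := ('I_p -> 'I_n) -> xexpr.

Definition hadd p (f g : hform p) : hform p := fun I sg a => f I sg a + g I sg a.

(* equality of horizontal forms: since ds_{I o pi} = sgn(pi) ds_I and
   ds_I = 0 for repeated indices, two coefficient families define the same
   form iff their signed symmetrizations agree. *)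
Definition heq p (f g : hform p) : Prop :=
  forall (I : 'I_p -> 'I_n) sg a,
    \sum_(pi : 'S_p) (-1) ^+ odd_perm pi * f (fun k => I (pi k)) sg a =
    \sum_(pi : 'S_p) (-1) ^+ odd_perm pi * g (fun k => I (pi k)) sg a.

Definition antisym p (c : ('I_p -> 'I_n) -> 'I_m -> F) : Prop :=
  forall (I : 'I_p -> 'I_n) (pi : 'S_p) sg,
    c (fun k => I (pi k)) sg = (-1) ^+ odd_perm pi * c I sg.

Definition ins p (K : 'I_p -> 'I_n) (k : 'I_p.+1) (i : 'I_n) : 'I_p.+1 -> 'I_n :=
  fun j => match unlift k j with Some j' => K j' | None => i end.
Definition snoc p (K : 'I_p -> 'I_n) (i : 'I_n) : 'I_p.+1 -> 'I_n := ins K ord_max i.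
Definition initI p (K : 'I_p.+1 -> 'I_n) : 'I_p -> 'I_n :=
  fun k => K (widen_ord (leqnSn p) k).
Definition lastI p (K : 'I_p.+1 -> 'I_n) : 'I_n := K ord_max.

(* Div (f^I ds_I) = d_l f^I dx^l /\ ds_I, using
   dx^l /\ ds_{i_1..i_{p+1}} = sum_k (-1)^{p+1-k} delta^l_{i_k} ds_{i_1..^i_k..i_{p+1}} *)
Definition Div (d : 'I_n -> F -> F) p (f : hform p.+1) : hform p :=
  fun K sg a => \sum_(k < p.+1) \sum_(i < n)
      (-1) ^+ (p - k) * dX d i (f (ins K k i)) sg a.

(* <E | J^1 Xi> for a variational morphism of rank 1, degree n-s, with
   coefficients v^{I}_sigma = v0, v^{I j}_sigma = v1 :
   (1/s!) (v^I_sigma Xi^sigma + v^{Ij}_sigma Xi^sigma_j) ds_I *)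
Definition pair1 s (v0 : ('I_s -> 'I_n) -> 'I_m -> F)
    (v1 : ('I_s -> 'I_n) -> 'I_n -> 'I_m -> F) : hform s :=
  fun I sg a => (s`!%:R : R)^-1 *:
    ((if a == mi0 then v0 I sg else 0) +
     \sum_(j < n) (if a == mi1 j then v1 I j sg else 0)).

(* <T | Xi> for a variational morphism of rank 0, degree n-(s+1) *)
Definition pair0 s (t : ('I_s.+1 -> 'I_n) -> 'I_m -> F) : hform s.+1 :=
  fun K sg a => ((s.+1)`!%:R : R)^-1 *: (if a == mi0 then t K sg else 0).

Definition reduced s (v1 : ('I_s -> 'I_n) -> 'I_n -> 'I_m -> F) : Prop :=
  forall (K : 'I_s.+1 -> 'I_n) sg,
    ((s.+1)`!%:R : R)^-1 *:
      \sum_(pi : 'S_s.+1) (-1) ^+ odd_perm pi *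
        v1 (initI (fun k => K (pi k))) (lastI (fun k => K (pi k))) sg = 0.

Definition Vrho s (A0 : ('I_s -> 'I_n) -> 'I_m -> F)
    (A1 : ('I_s -> 'I_n) -> 'I_n -> 'I_m -> F) : hform s :=
  fun I sg a => (if a == mi0 then A0 I sg else 0) +
     \sum_(j < n) (if a == mi1 j then A1 I j sg else 0).

Definition that s (A1 : ('I_s -> 'I_n) -> 'I_n -> 'I_m -> F)
    (K : 'I_s.+1 -> 'I_n) (sg : 'I_m) : F :=
  ((s.+1)`!%:R : R)^-1 *:
    \sum_(pi : 'S_s.+1) (-1) ^+ odd_perm pi *
       A1 (initI (fun k => K (pi k))) (lastI (fun k => K (pi k))) sg.

Definition Tprime s (A1 : ('I_s -> 'I_n) -> 'I_n -> 'I_m -> F) : hform s.+1 :=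
  fun K sg a => (s.+1%:R : R)^-1 *: (if a == mi0 then that A1 K sg else 0).

Definition Eprime (d : 'I_n -> F -> F) s (A0 : ('I_s -> 'I_n) -> 'I_m -> F)
    (A1 : ('I_s -> 'I_n) -> 'I_n -> 'I_m -> F) : hform s :=
  fun I sg a =>
    (if a == mi0 then A0 I sg - \sum_(i < n) d i (that A1 (snoc I i) sg) else 0) +
    \sum_(j < n) (if a == mi1 j then A1 I j sg - that A1 (snoc I j) sg else 0).

End FormalJets.

(* The divergence of a rank-0 morphism with antisymmetric coefficients t^{I i} is the
   first-order form with coefficient d_i t^{I i} on Xi^sigma and t^{I j} on Xi^sigma_j.
   Hence every side of both splittings is a first-order form with antisymmetric
   coefficients, and two such forms agree iff their coefficients do; this gives the
   splitting through T' at once.  For uniqueness, comparing the coefficients of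
   Xi^sigma_j in V_rho = E + Div T gives s! A^{I j} = e^{I j} + t^{I j}; antisymmetrizing
   in (I, j) kills e by reducedness, so hat t = t / s!, i.e. T = T', and then E = E'. *)

From Pilot Require Import Defs.
From Stdlib Require Import FunctionalExtensionality.
From HB Require Import structures.
From mathcomp Require Import all_boot all_order all_algebra all_fingroup.
Set Implicit Arguments. Unset Strict Implicit. Unset Printing Implicit Defensive.
Import GRing.Theory Num.Theory.
Local Open Scope ring_scope.

Section Indices.
Variable n : nat.

Lemma ins_lift p (K : 'I_p -> 'I_n) k i (j : 'I_p) : ins K k i (lift k j) = K j.
Proof. by rewrite /ins liftK. Qed.

Lemma ins_id p (K : 'I_p -> 'I_n) k i : ins K k i k = i.
Proof. by rewrite /ins unlift_none. Qed.

Lemma ins_snoc_perm p (K : 'I_p -> 'I_n) (k : 'I_p.+1) i :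
  ins K k i = (fun j => snoc K i (lift_perm k ord_max 1 j)).
Proof.
apply: functional_extensionality => j; rewrite /snoc.
case: (unliftP k j) => [j'|] ->; first by rewrite lift_perm_lift perm1 !ins_lift.
by rewrite lift_perm_id !ins_id.
Qed.

Lemma snoc_perm p (K : 'I_p -> 'I_n) i (pi : 'S_p) :
  snoc (fun k => K (pi k)) i = (fun j => snoc K i (lift_perm ord_max ord_max pi j)).
Proof.
apply: functional_extensionality => j; rewrite /snoc.
case: (unliftP ord_max j) => [j'|] ->; first by rewrite lift_perm_lift !ins_lift.
by rewrite lift_perm_id !ins_id.
Qed.

Lemma snoc_initI_lastI p (K : 'I_p.+1 -> 'I_n) : snoc (Defs.initI K) (Defs.lastI K) = K.
Proof.
apply: functional_extensionality => j; rewrite /snoc.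
case: (unliftP ord_max j) => [j'|] ->; last by rewrite ins_id.
rewrite ins_lift /Defs.initI; congr K; apply: val_inj => /=.
by rewrite /bump leqNgt ltn_ord.
Qed.

Lemma mi_dec_eq0 (a : mindex n) i :
  ((0 < a i)%N && (mi_dec a i == mi0 n)) = (a == mi1 i).
Proof.
apply/idP/eqP => [/andP[ai_gt0 /eqP/ffunP a_dec] | ->].
  apply/ffunP => l; move: (a_dec l); rewrite !ffunE.
  by case: eqP => [->|//]; move: ai_gt0; case: (a i) => [|[]].
rewrite !ffunE eqxx /=; apply/eqP/ffunP => l.
by rewrite !ffunE; case: (l == i).
Qed.

Lemma eq_mi1 (j j' : 'I_n) : (mi1 j == mi1 j') = (j' == j).
Proof.
apply/eqP/eqP => [/ffunP /(_ j')|->] //.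
by rewrite !ffunE eqxx; case: eqP.
Qed.

Lemma mi0_eq_mi1 (j : 'I_n) : (mi0 n == mi1 j) = false.
Proof. by apply/eqP => /ffunP /(_ j); rewrite !ffunE eqxx. Qed.

End Indices.

Section AlternatingSums.
Variables (V : pzRingType) (n : nat).

Lemma alt_sum_antisym p (f : ('I_p -> 'I_n) -> V) :
  (forall I (pi : 'S_p), f (fun k => I (pi k)) = (-1) ^+ odd_perm pi * f I) ->
  forall I, \sum_(pi : 'S_p) (-1) ^+ odd_perm pi * f (fun k => I (pi k)) = p`!%:R * f I.
Proof.
move=> f_alt I; under eq_bigr => pi _ do rewrite f_alt signrMK.
by rewrite sumr_const card_Sn mulr_natl.
Qed.

Lemma alt_sum_perm p (f : ('I_p -> 'I_n) -> V) (K : 'I_p -> 'I_n) (rho : 'S_p) :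
  \sum_(pi : 'S_p) (-1) ^+ odd_perm pi * f (fun k => K (rho (pi k)))
  = (-1) ^+ odd_perm rho * \sum_(pi : 'S_p) (-1) ^+ odd_perm pi * f (fun k => K (pi k)).
Proof.
have K_rho (pi : 'S_p) : (fun k => K (rho (pi k))) = (fun k => K ((pi * rho)%g k)).
  by apply: functional_extensionality => k; rewrite permM.
under eq_bigr => pi _ do rewrite K_rho.
rewrite (reindex_inj (mulIg rho^-1)%g) /= mulr_sumr.
apply: eq_bigr => pi _.
by rewrite mulgKV odd_permM odd_permV addbC signr_addb mulrA.
Qed.

End AlternatingSums.

Section Antisymmetry.
Variables (R : numFieldType) (F : comAlgType R) (n m : nat).

Lemma antisym_snoc p (t : ('I_p.+1 -> 'I_n) -> 'I_m -> F) i :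
  antisym t -> antisym (fun K => t (snoc K i)).
Proof. by move=> t_alt K pi sg; rewrite snoc_perm t_alt odd_lift_perm addbb. Qed.

Lemma antisym_ins p (t : ('I_p.+1 -> 'I_n) -> 'I_m -> F) (K : 'I_p -> 'I_n) (k : 'I_p.+1) i sg :
  antisym t -> (-1) ^+ (p - k) * t (ins K k i) sg = t (snoc K i) sg.
Proof.
move=> t_alt; rewrite ins_snoc_perm t_alt odd_lift_perm odd_perm1 addbF /=.
have k_le_p : (k <= p)%N by rewrite -ltnS.
by rewrite -signr_odd (oddB k_le_p) addbC signrMK.
Qed.

Lemma antisymD p (f g : ('I_p -> 'I_n) -> 'I_m -> F) :
  antisym f -> antisym g -> antisym (fun I sg => f I sg + g I sg).
Proof. by move=> f_alt g_alt I pi sg; rewrite f_alt g_alt mulrDr. Qed.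

Lemma antisymZ p (c : R) (f : ('I_p -> 'I_n) -> 'I_m -> F) :
  antisym f -> antisym (fun I sg => c *: f I sg).
Proof. by move=> f_alt I pi sg; rewrite f_alt scalerAr. Qed.

Lemma that_antisym s (A1 : ('I_s -> 'I_n) -> 'I_n -> 'I_m -> F) : antisym (that A1).
Proof.
move=> K rho sg; rewrite /that.
by rewrite (alt_sum_perm (fun K => A1 (Defs.initI K) (Defs.lastI K) sg)) scalerAr.
Qed.

End Antisymmetry.

Section FirstOrderForms.
Variables (R : numFieldType) (F : comAlgType R) (n m : nat).

Lemma scale_invr_natrM k (x : F) : (0 < k)%N -> (k%:R : R)^-1 *: (k%:R * x) = x.
Proof.
by move=> k_gt0; rewrite mulr_natl -scaler_nat scalerA mulVf ?scale1r // pnatr_eq0 -lt0n.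
Qed.

Lemma factS_invM k : ((k.+1)`!%:R : R)^-1 * k.+1%:R = (k`!%:R)^-1.
Proof. by rewrite factS natrM invfM mulrAC mulVf ?mul1r ?pnatr_eq0. Qed.

Lemma natr_mul_inj k : (0 < k)%N -> injective (fun x : F => k%:R * x).
Proof.
by move=> k_gt0 x y /= kxy; rewrite -(scale_invr_natrM x k_gt0) kxy scale_invr_natrM.
Qed.

Lemma eq_heq p (f g : hform F n m p) :
  (forall I sg a, f I sg a = g I sg a) -> heq f g.
Proof. by move=> fg I sg a; apply: eq_bigr => pi _; rewrite fg. Qed.

Lemma heq_antisym_eq p (f g : hform F n m p) :
  (forall I (pi : 'S_p) sg a, f (fun k => I (pi k)) sg a = (-1) ^+ odd_perm pi * f I sg a) ->
  (forall I (pi : 'S_p) sg a, g (fun k => I (pi k)) sg a = (-1) ^+ odd_perm pi * g I sg a) ->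
  heq f g -> forall I sg a, f I sg a = g I sg a.
Proof.
move=> f_alt g_alt fg I sg a; apply: (natr_mul_inj (fact_gt0 p)) => /=.
rewrite -(alt_sum_antisym (f := fun I => f I sg a)) => [|J pi]; last exact: f_alt.
by rewrite fg (alt_sum_antisym (f := fun I => g I sg a)) // => J pi; apply: g_alt.
Qed.

Variable s : nat.
Local Notation coef0 := (('I_s -> 'I_n) -> 'I_m -> F).
Local Notation coef1 := (('I_s -> 'I_n) -> 'I_n -> 'I_m -> F).

Lemma Vrho_mi0 (A0 : coef0) (A1 : coef1) I sg : Vrho A0 A1 I sg (mi0 n) = A0 I sg.
Proof. by rewrite /Vrho eqxx big1 ?addr0 // => j _; rewrite mi0_eq_mi1. Qed.

Lemma Vrho_mi1 (A0 : coef0) (A1 : coef1) I j sg : Vrho A0 A1 I sg (mi1 j) = A1 I j sg.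
Proof.
rewrite /Vrho eq_sym mi0_eq_mi1 add0r.
by under eq_bigr do rewrite eq_mi1; rewrite -big_mkcond big_pred1_eq.
Qed.

Lemma eq_Vrho (A0 B0 : coef0) (A1 B1 : coef1) I sg a :
  (forall I sg, A0 I sg = B0 I sg) -> (forall I j sg, A1 I j sg = B1 I j sg) ->
  Vrho A0 A1 I sg a = Vrho B0 B1 I sg a.
Proof.
by move=> AB0 AB1; rewrite /Vrho AB0; congr (_ + _); apply: eq_bigr => j _; rewrite AB1.
Qed.

Lemma VrhoD (A0 B0 : coef0) (A1 B1 : coef1) I sg a :
  hadd (Vrho A0 A1) (Vrho B0 B1) I sg a
  = Vrho (fun I sg => A0 I sg + B0 I sg) (fun I j sg => A1 I j sg + B1 I j sg) I sg a.
Proof.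
rewrite /hadd /Vrho addrACA -big_split /=; congr (_ + _).
  by case: (a == mi0 n); rewrite ?addr0.
by apply: eq_bigr => j _; case: (a == mi1 j); rewrite ?addr0.
Qed.

Lemma VrhoZ (c : R) (A0 : coef0) (A1 : coef1) I sg a :
  c *: Vrho A0 A1 I sg a = Vrho (fun I sg => c *: A0 I sg) (fun I j sg => c *: A1 I j sg) I sg a.
Proof.
rewrite /Vrho scalerDr scaler_sumr; congr (_ + _).
  by case: (a == mi0 n); rewrite ?scaler0.
by apply: eq_bigr => j _; case: (a == mi1 j); rewrite ?scaler0.
Qed.

Lemma Vrho_antisym (A0 : coef0) (A1 : coef1) :
  antisym A0 -> (forall j, antisym (fun I => A1 I j)) ->
  forall I (pi : 'S_s) sg a,
    Vrho A0 A1 (fun k => I (pi k)) sg a = (-1) ^+ odd_perm pi * Vrho A0 A1 I sg a.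
Proof.
move=> A0_alt A1_alt I pi sg a.
rewrite /Vrho A0_alt mulrDr mulr_sumr (fun_if (fun x => _ * x)) mulr0; congr (_ + _).
apply: eq_bigr => j _; rewrite (A1_alt j I pi sg).
by case: (a == mi1 j); rewrite ?mulr0.
Qed.

Lemma Vrho_heq_coef (A0 B0 : coef0) (A1 B1 : coef1) :
  antisym A0 -> (forall j, antisym (fun I => A1 I j)) ->
  antisym B0 -> (forall j, antisym (fun I => B1 I j)) ->
  heq (Vrho A0 A1) (Vrho B0 B1) ->
  (forall I sg, A0 I sg = B0 I sg) /\ (forall I j sg, A1 I j sg = B1 I j sg).
Proof.
move=> A0_alt A1_alt B0_alt B1_alt AB.
have AB_pt := heq_antisym_eq (Vrho_antisym A0_alt A1_alt) (Vrho_antisym B0_alt B1_alt) AB.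
split=> [I sg | I j sg]; first by rewrite -(Vrho_mi0 A0 A1) -(Vrho_mi0 B0 B1) AB_pt.
by rewrite -(Vrho_mi1 A0 A1) -(Vrho_mi1 B0 B1) AB_pt.
Qed.

End FirstOrderForms.

Section Divergence.
Variables (R : numFieldType) (F : comAlgType R) (n m : nat).
Variable d : 'I_n -> {linear F -> F}.

Lemma antisym_div_snoc p (t : ('I_p.+1 -> 'I_n) -> 'I_m -> F) :
  antisym t -> antisym (fun J sg => \sum_(i < n) d i (t (snoc J i) sg)).
Proof.
move=> t_alt J pi sg; rewrite mulr_sumr.
by apply: eq_bigr => i _; rewrite (antisym_snoc i t_alt) raddfMsign.
Qed.

Lemma Div_rank0 p (c : R) (g : ('I_p.+1 -> 'I_n) -> 'I_m -> F) (f : hform F n m p.+1) K sg a :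
  antisym g -> (forall K sg a, f K sg a = c *: (if a == mi0 n then g K sg else 0)) ->
  Div (fun i => d i) f K sg a
  = Vrho (fun J sg => (c * p.+1%:R) *: \sum_(i < n) d i (g (snoc J i) sg))
         (fun J j sg => (c * p.+1%:R) *: g (snoc J j) sg) K sg a.
Proof.
move=> g_alt f_def.
(* After moving the inserted index i to the end, every position k gives the same term. *)
have term (k : 'I_p.+1) i :
    (-1) ^+ (p - k) * dX (fun i => d i) i (f (ins K k i)) sg a
    = c *: ((if a == mi0 n then d i (g (snoc K i) sg) else 0)
            + (if a == mi1 i then g (snoc K i) sg else 0)).
  rewrite /dX !f_def -mi_dec_eq0 -(antisym_ins K k i sg g_alt).
  have [->|_] := eqVneq a (mi0 n).
    by rewrite ffunE ltnn /= !addr0 linearZ raddfMsign scalerAr.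
  rewrite scaler0 raddf0 !add0r.
  by case: (0 < a i)%N; case: (mi_dec a i == mi0 n); rewrite /= ?scaler0 ?mulr0 ?scalerAr.
rewrite /Div; under eq_bigr => k _ do under eq_bigr => i _ do rewrite term.
rewrite sumr_const card_ord -scaler_sumr -scaler_nat scalerA mulrC -VrhoZ.
rewrite big_split /Vrho /=; congr (_ *: (_ + _)).
by case: (a == mi0 n); rewrite // big1.
Qed.

End Divergence.

Section Splitting.
Variables (R : numFieldType) (F : comAlgType R) (n m s : nat).
Variable d : 'I_n -> {linear F -> F}.
Variables (A0 : ('I_s -> 'I_n) -> 'I_m -> F) (A1 : ('I_s -> 'I_n) -> 'I_n -> 'I_m -> F).

Let c : R := (s`!%:R)^-1.
Let E0 I sg := A0 I sg - \sum_(i < n) d i (that A1 (snoc I i) sg).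
Let E1 I j sg := A1 I j sg - that A1 (snoc I j) sg.

Let Eprime_Vrho I sg a : Eprime (fun i => d i) A0 A1 I sg a = Vrho E0 E1 I sg a.
Proof. by []. Qed.

Lemma Vrho_Eprime_split :
  heq (Vrho A0 A1) (hadd (Eprime (fun i => d i) A0 A1) (Div (fun i => d i) (Tprime A1))).
Proof.
apply: eq_heq => I sg a.
rewrite /hadd (Div_rank0 d (c := (s.+1%:R)^-1) _ _ _ (that_antisym A1)) //.
rewrite Eprime_Vrho -[_ + _]/(hadd _ _ I sg a) VrhoD.
rewrite mulVf ?pnatr_eq0 //.
by apply: eq_Vrho => [J sg' | J j sg']; rewrite scale1r subrK.
Qed.

Lemma splitting_coef (e0 : ('I_s -> 'I_n) -> 'I_m -> F)
    (e1 : ('I_s -> 'I_n) -> 'I_n -> 'I_m -> F) (t : ('I_s.+1 -> 'I_n) -> 'I_m -> F) :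
  antisym A0 -> (forall j, antisym (fun I => A1 I j)) ->
  antisym e0 -> (forall j, antisym (fun I => e1 I j)) -> antisym t ->
  heq (Vrho A0 A1) (hadd (pair1 e0 e1) (Div (fun i => d i) (pair0 t))) ->
  (forall I sg, A0 I sg = c *: (e0 I sg + \sum_(i < n) d i (t (snoc I i) sg)))
  /\ (forall I j sg, A1 I j sg = c *: (e1 I j sg + t (snoc I j) sg)).
Proof.
move=> A0_alt A1_alt e0_alt e1_alt t_alt V_split.
have split_Vrho I sg a :
    hadd (pair1 e0 e1) (Div (fun i => d i) (pair0 t)) I sg a
    = Vrho (fun I sg => c *: (e0 I sg + \sum_(i < n) d i (t (snoc I i) sg)))
           (fun I j sg => c *: (e1 I j sg + t (snoc I j) sg)) I sg a.
  rewrite /hadd (Div_rank0 d (c := ((s.+1)`!%:R)^-1) _ _ _ t_alt) // factS_invM.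
  rewrite -[pair1 e0 e1 I sg a]/(c *: Vrho e0 e1 I sg a) VrhoZ.
  rewrite -[_ + _]/(hadd _ _ I sg a) VrhoD.
  by apply: eq_Vrho => *; rewrite scalerDr.
apply: Vrho_heq_coef => //.
- by apply/antisymZ/antisymD => //; apply: antisym_div_snoc.
- by move=> j; apply/antisymZ/antisymD => //; apply: antisym_snoc.
- by move=> I sg a; rewrite V_split; apply: eq_bigr => pi _; rewrite split_Vrho.
Qed.

Lemma that_reduced_splitting (e1 : ('I_s -> 'I_n) -> 'I_n -> 'I_m -> F)
    (t : ('I_s.+1 -> 'I_n) -> 'I_m -> F) :
  reduced e1 -> antisym t ->
  (forall I j sg, A1 I j sg = c *: (e1 I j sg + t (snoc I j) sg)) ->
  forall K sg, that A1 K sg = c *: t K sg.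
Proof.
move=> e1_red t_alt A1_split K sg; rewrite /that.
under eq_bigr do rewrite A1_split snoc_initI_lastI -scalerAr mulrDr.
rewrite -scaler_sumr big_split /= scalerA mulrC -scalerA scalerDr e1_red add0r.
rewrite (alt_sum_antisym (f := fun K => t K sg)) => [|J pi]; last exact: t_alt.
by rewrite scale_invr_natrM ?fact_gt0.
Qed.

Lemma canonical_splitting_unique (e0 : ('I_s -> 'I_n) -> 'I_m -> F)
    (e1 : ('I_s -> 'I_n) -> 'I_n -> 'I_m -> F) (t : ('I_s.+1 -> 'I_n) -> 'I_m -> F) :
  antisym A0 -> (forall j, antisym (fun I => A1 I j)) ->
  antisym e0 -> (forall j, antisym (fun I => e1 I j)) -> reduced e1 -> antisym t ->
  heq (Vrho A0 A1) (hadd (pair1 e0 e1) (Div (fun i => d i) (pair0 t))) ->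
  heq (pair1 e0 e1) (Eprime (fun i => d i) A0 A1) /\ heq (pair0 t) (Tprime A1).
Proof.
move=> A0_alt A1_alt e0_alt e1_alt e1_red t_alt V_split.
have [A0_split A1_split] := splitting_coef A0_alt A1_alt e0_alt e1_alt t_alt V_split.
have that_t := that_reduced_splitting e1_red t_alt A1_split.
split; apply: eq_heq => I sg a.
  rewrite Eprime_Vrho -[pair1 e0 e1 I sg a]/(c *: Vrho e0 e1 I sg a) VrhoZ.
  apply: eq_Vrho => [J sg' | J j sg'].
    rewrite /E0 A0_split; under [X in _ - X]eq_bigr do rewrite that_t linearZ.
    by rewrite -scaler_sumr -scalerBr addrK.
  by rewrite /E1 A1_split that_t -scalerBr addrK.
rewrite /pair0 /Tprime that_t.
by case: (a == mi0 n); rewrite ?scaler0 // scalerA factS natrM invfM.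
Qed.

End Splitting.

Theorem proposition4p3 (R : numFieldType) (F : comAlgType R) (n m s : nat)
  (d : 'I_n -> {linear F -> F})
  (d_leibniz : forall i (a b : F), d i (a * b) = d i a * b + a * d i b)
  (d_comm : forall i j (a : F), d i (d j a) = d j (d i a))
  (hs : (s < n)%N)
  (A0 : ('I_s -> 'I_n) -> 'I_m -> F) (A1 : ('I_s -> 'I_n) -> 'I_n -> 'I_m -> F)
  (hA0 : antisym A0) (hA1 : forall j, antisym (fun I => A1 I j)) :
  heq (Vrho A0 A1) (hadd (Eprime (fun i => d i) A0 A1) (Div (fun i => d i) (Tprime A1)))
  /\ (forall (e0 : ('I_s -> 'I_n) -> 'I_m -> F)
             (e1 : ('I_s -> 'I_n) -> 'I_n -> 'I_m -> F)
             (t : ('I_s.+1 -> 'I_n) -> 'I_m -> F),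
        antisym e0 -> (forall j, antisym (fun I => e1 I j)) -> reduced e1 ->
        antisym t ->
        heq (Vrho A0 A1) (hadd (pair1 e0 e1) (Div (fun i => d i) (pair0 t))) ->
        heq (pair1 e0 e1) (Eprime (fun i => d i) A0 A1) /\ heq (pair0 t) (Tprime A1)).
Proof.
split; first exact: Vrho_Eprime_split.
by move=> e0 e1 t; apply: canonical_splitting_unique.
Qed.
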